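(* Let $q\in\mathbb{C}^\times$ be not a root of unity, $Q\in\mathbb{C}^\times$, $\varphi\in\mathbb{C}[x]^{\langle Q\rangle}$, and let $v_0$ be a highest weight vector of the $U_q(\mathfrak{sl}_2^{\langle Q\rangle}[x])$-module $L(\mathbf{u}^{\langle Q\rangle}(\varphi))$. Then, as formal Laurent series in $w$, $$\Psi^+(w)\cdot v_0=q^{\deg\varphi}\frac{\varphi^\flat(q^{-2}w)}{\varphi^\flat(w)}\big(\beta_\varphi^{-1}-Q\beta_\varphi w^{-1}\big)v_0.$$
   Context: $[k]=(q^k-q^{-k})/(q-q^{-1})$, $[x,y]=xy-yx$. $U_q(\mathfrak{sl}_2^{\langle Q\rangle}[x])$ is the $\mathbb{C}$-algebra with generators $X^\pm_t,J_t$ ($t\ge0$), $K^\pm$ and relations: $K^+$ and all $J_t$ pairwise commute; $K^+K^-=1=K^-K^+$; $(K^-)^2=1-(q-q^{-1})J_0$; $X^\pm_{t+1}X^\pm_s-q^{\pm2}X^\pm_sX^\pm_{t+1}=q^{\pm2}X^\pm_tX^\pm_{s+1}-X^\pm_{s+1}X^\pm_t$; $K^+X^\pm_tK^-=q^{\pm2}X^\pm_t$; $q^{\pm2}J_0X^\pm_t-q^{\mp2}X^\pm_tJ_0=\pm[2]X^\pm_t$; $[J_{s+1},X^\pm_t]=q^{\pm2}J_sX^\pm_{t+1}-q^{\mp2}X^\pm_{t+1}J_s$; $[X^+_t,X^-_s]=K^+(J_{s+t}-QJ_{s+t+1})$. Elements: $\Psi^+_{-1}=-QK^+$, $\Psi^+_0=K^+-(q-q^{-1})QK^+J_1$,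 $\Psi^+_t=(q-q^{-1})K^+(J_t-QJ_{t+1})$ for $t>0$; $\Psi^+(w)=\sum_{t\ge-1}\Psi^+_tw^t$. For $\mathbf{u}=(\lambda,(u_t)_{t>0})$, $L(\mathbf{u})$ is the simple module generated by a highest weight vector $v_0$: $X^+_tv_0=0$, $K^+v_0=\lambda v_0$, $J_tv_0=u_tv_0$ ($t>0$). With $p_t(q)(x_1,\dots,x_k)=\sum_{\lambda\vdash t,\ell(\lambda)\le k}q^{-\ell(\lambda)}(q-q^{-1})^{\ell(\lambda)-1}m_\lambda(x_1,\dots,x_k)$, $\tilde\beta=(q-q^{-1})^{-1}(1-\beta^{-2})$ and $p^{\langle Q\rangle}_t(q;\beta)=p_t(q)+\tilde\beta Q^{-t}+(q-q^{-1})\sum_{z=1}^{t-1}\tilde\beta Q^{-t+z}p_z(q)$: for nonzero $\varphi=\beta_\varphi(x-\gamma_1)\cdots(x-\gamma_k)$, $\mathbf{u}^{\langle Q\rangle}(\varphi)=(\beta_\varphi,(\tilde\beta_\varphi Q^{-t})_{t>0})$ if $k=0$ and $(\beta_\varphi q^k,(p^{\langle Q\rangle}_t(q;\beta_\varphi)(\gamma_1,\dots,\gamma_k))_{t>0})$ if $k>0$. $\mathbb{C}[x]^{\langle Q\rangle}=\{\varphi\ne0:\beta_\varphi^{-2}Q^{-1}\text{ not a root of }\varphi\}$. $\varphi^\flat(w)=(1-\gamma_1w)\cdots(1-\gamma_kw)$. *)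

From mathcomp Require Import all_boot all_algebra.
From mathcomp Require Import complex Rstruct.
Set Implicit Arguments. Unset Strict Implicit. Unset Printing Implicit Defensive.
Import GRing.Theory.
Local Open Scope ring_scope.

Definition C : fieldType := (Rdefinitions.R)[i].

Definition qint (q : C) (k : nat) : C := (q ^+ k - q ^- k) / (q - q^-1).

(* Modules over U_q(sl_2^<Q>[x]):  a C-vector space V with linear     *)
(* operators X^+_t, X^-_t, J_t (t >= 0), K^+, K^- satisfying the       *)
(* defining relations (products in the algebra act as composition).    *)
Record UqModule (q Q : C) (V : lmodType C) := {
  Xp : nat -> {linear V -> V};
  Xm : nat -> {linear V -> V};
  J  : nat -> {linear V -> V};
  Kp : {linear V -> V};
  Km : {linear V -> V};
  rel_KJ : forall t v, Kp (J t v) = J t (Kp v);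
  rel_JJ : forall s t v, J s (J t v) = J t (J s v);
  rel_KpKm : forall v, Kp (Km v) = v;
  rel_KmKp : forall v, Km (Kp v) = v;
  rel_Km2 : forall v, Km (Km v) = v - (q - q^-1) *: J 0 v;
  rel_XXp : forall t s v,
    Xp t.+1 (Xp s v) - q ^+ 2 *: Xp s (Xp t.+1 v)
    = q ^+ 2 *: Xp t (Xp s.+1 v) - Xp s.+1 (Xp t v);
  rel_XXm : forall t s v,
    Xm t.+1 (Xm s v) - q ^- 2 *: Xm s (Xm t.+1 v)
    = q ^- 2 *: Xm t (Xm s.+1 v) - Xm s.+1 (Xm t v);
  rel_KXp : forall t v, Kp (Xp t (Km v)) = q ^+ 2 *: Xp t v;
  rel_KXm : forall t v, Kp (Xm t (Km v)) = q ^- 2 *: Xm t v;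
  rel_J0Xp : forall t v,
    q ^+ 2 *: J 0 (Xp t v) - q ^- 2 *: Xp t (J 0 v) = qint q 2 *: Xp t v;
  rel_J0Xm : forall t v,
    q ^- 2 *: J 0 (Xm t v) - q ^+ 2 *: Xm t (J 0 v) = - (qint q 2 *: Xm t v);
  rel_JXp : forall s t v,
    J s.+1 (Xp t v) - Xp t (J s.+1 v)
    = q ^+ 2 *: J s (Xp t.+1 v) - q ^- 2 *: Xp t.+1 (J s v);
  rel_JXm : forall s t v,
    J s.+1 (Xm t v) - Xm t (J s.+1 v)
    = q ^- 2 *: J s (Xm t.+1 v) - q ^+ 2 *: Xm t.+1 (J s v);
  rel_XpXm : forall t s v,
    Xp t (Xm s v) - Xm s (Xp t v) = Kp (J (s + t) v - Q *: J (s + t).+1 v)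
}.

Definition is_submodule (q Q : C) (V : lmodType C) (M : UqModule q Q V)
    (S : V -> Prop) : Prop :=
  [/\ S 0,
      (forall u v, S u -> S v -> S (u + v)),
      (forall (a : C) v, S v -> S (a *: v)),
      (forall t v, S v -> [/\ S (Xp M t v), S (Xm M t v) & S (J M t v)]) &
      (forall v, S v -> S (Kp M v) /\ S (Km M v))].

Definition simple_module (q Q : C) (V : lmodType C) (M : UqModule q Q V) : Prop :=
  (exists v : V, v != 0) /\
  forall S, is_submodule M S -> (forall v, S v -> v = 0) \/ (forall v, S v).

Definition highest_weight_vector (q Q : C) (V : lmodType C) (M : UqModule q Q V)
    (lam : C) (u : nat -> C) (v0 : V) : Prop :=
  [/\ v0 != 0,
      (forall t, Xp M t v0 = 0),
      Kp M v0 = lam *: v0 &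
      (forall t, (0 < t)%N -> J M t v0 = u t *: v0)].

(* L(u): a simple module generated by a highest weight vector v0 of weight u
   (generation is automatic from simplicity since v0 != 0). *)
Definition is_L (q Q : C) (V : lmodType C) (M : UqModule q Q V)
    (lam : C) (u : nat -> C) (v0 : V) : Prop :=
  simple_module M /\ highest_weight_vector M lam u v0.

(* The coefficients Psi^+_t (t >= -1) acting on v; Psi^+(w) = sum_{t>=-1} Psi^+_t w^t,
   so the coefficient of w^t is 0 for t < -1. *)
Definition Psi (q Q : C) (V : lmodType C) (M : UqModule q Q V) (t : int) (v : V) : V :=
  match t with
  | Negz 0 => - (Q *: Kp M v)                                           (* t = -1 *)
  | Negz _ => 0                                                         (* t < -1 *)
  | Posz 0 => Kp M v - ((q - q^-1) * Q) *: Kp M (J M 1 v)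
  | Posz t => (q - q^-1) *: Kp M (J M t v - Q *: J M t.+1 v)
  end.

Definition nparts (k t : nat) (a : {ffun 'I_k -> 'I_t.+1}) : nat :=
  #|[pred i | (a i != 0 :> nat)]|.

(* p_t(q)(x_1..x_k) = sum_{lambda |- t, l(lambda) <= k} q^{-l}(q-q^{-1})^{l-1} m_lambda(x),
   with m_lambda written out as the sum of x^alpha over the distinct rearrangements
   alpha in N^k of lambda (padded by zeros); summing over all lambda this is the sum
   over all alpha in N^k with |alpha| = t, l(lambda) being the number of nonzero parts. *)
Definition p_t (q : C) (t : nat) (xs : seq C) : C :=
  \sum_(a : {ffun 'I_(size xs) -> 'I_t.+1} | (\sum_(i < size xs) (a i : nat) == t)%N)
     q ^- nparts a * (q - q^-1) ^+ (nparts a).-1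
       * \prod_(i < size xs) (nth 0 xs i) ^+ (a i : nat).

Definition beta_tilde (q beta : C) : C := (q - q^-1)^-1 * (1 - beta ^- 2).

Definition pQ_t (q Q beta : C) (t : nat) (xs : seq C) : C :=
  p_t q t xs + beta_tilde q beta * Q ^- t
  + (q - q^-1) * \sum_(1 <= z < t) beta_tilde q beta * Q ^- (t - z) * p_t q z xs.

(* For phi = beta (x - g_1)...(x - g_k), u^<Q>(phi) = (lam, (u_t)_{t>0}). *)
Definition uQ_lam (q beta : C) (gs : seq C) : C :=
  if size gs == 0%N then beta else beta * q ^+ size gs.

Definition uQ_u (q Q beta : C) (gs : seq C) (t : nat) : C :=
  if size gs == 0%N then beta_tilde q beta * Q ^- t else pQ_t q Q beta t gs.

Definition phiflat (gs : seq C) : {poly C} := \prod_(g <- gs) (1 - g *: 'X).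

Definition ps_mul (f g : nat -> C) (n : nat) : C :=
  \sum_(i < n.+1) f i * g (n - i)%N.

Fixpoint ps_inv_seq (f : nat -> C) (n : nat) : seq C :=
  match n with
  | 0 => [:: (f 0%N)^-1]
  | n'.+1 => let s := ps_inv_seq f n' in
             rcons s (- (f 0%N)^-1 * \sum_(1 <= i < n'.+2) f i * nth 0 s (n'.+1 - i))
  end.
Definition ps_inv (f : nat -> C) (n : nat) : C := nth 0 (ps_inv_seq f n) n.

Definition ps_of_poly (p : {poly C}) : nat -> C := fun n => p`_n.

(* quotient a(w)/b(w) of polynomials as a power series (b(0) != 0) *)
Definition ps_div_poly (a b : {poly C}) : nat -> C :=
  ps_mul (ps_of_poly a) (ps_inv (ps_of_poly b)).

(* Laurent series F(w) * (c0 + cm1 w^{-1}) for a power series F: coefficient of w^t *)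
Definition laurent_mul_shift (F : nat -> C) (c0 cm1 : C) (t : int) : C :=
  match t with
  | Posz n => c0 * F n + cm1 * F n.+1
  | Negz 0 => cm1 * F 0%N
  | Negz _ => 0
  end.

(* On the highest weight vector v0 every Psi^+_t acts by a scalar read off from
   the weight: K^+ v0 = lambda v0 and J_t v0 = u_t v0.  For u = u^<Q>(phi) the
   beta-tilde tails of u_t - Q u_{t+1} telescope, leaving
   beta^-2 p_t(q)(gamma) - Q p_{t+1}(q)(gamma).  Finally (q - q^-1) p_t(q)(gamma)
   is the coefficient of w^t in phi^flat(q^-2 w) / phi^flat(w): each factor
   (1 - q^-2 gamma_i w) / (1 - gamma_i w) expands as
   1 + (1 - q^-2) sum_{j>=1} gamma_i^j w^j, so a monomial with l nonzero
   exponents is weighted by (1 - q^-2)^l = q^-l (q - q^-1)^l. *)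
From mathcomp Require Import all_boot all_algebra.
From mathcomp Require Import complex Rstruct.
From mathcomp Require Import ring.
Set Implicit Arguments.
Unset Strict Implicit.
Unset Printing Implicit Defensive.
Import GRing.Theory.
Local Open Scope ring_scope.

Section TruncatedEquality.
Variable R : nzRingType.

Definition eq_upto (N : nat) (p r : {poly R}) : Prop :=
  forall i, (i <= N)%N -> p`_i = r`_i.

Lemma eq_upto_sym N p r : eq_upto N p r -> eq_upto N r p.
Proof. by move=> h i hi; rewrite h. Qed.

Lemma eq_uptoM N p p' r r' :
  eq_upto N p p' -> eq_upto N r r' -> eq_upto N (p * r) (p' * r').
Proof.
move=> hp hr i hi; rewrite !coefM; apply: eq_bigr => j _.
rewrite hp ?hr //; first exact: leq_trans (leq_subr _ _) hi.
by apply: leq_trans hi; rewrite -ltnS.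
Qed.

Lemma eq_upto_prod N k (F G : 'I_k -> {poly R}) :
  (forall i, eq_upto N (F i) (G i)) ->
  eq_upto N (\prod_(i < k) F i) (\prod_(i < k) G i).
Proof. by move=> h; apply: (big_ind2 (eq_upto N)) => // *; apply: eq_uptoM. Qed.

End TruncatedEquality.

Section GeometricRatio.
Variables (R : comNzRingType) (c : R).

Lemma coef_prod_poly k t (E : 'I_k -> nat -> R) :
  (\prod_(i < k) \poly_(j < t.+1) E i j)`_t =
  \sum_(a : {ffun 'I_k -> 'I_t.+1} | (\sum_(i < k) (a i : nat) == t)%N)
     \prod_(i < k) E i (a i).
Proof.
under eq_bigr do rewrite poly_def.
rewrite bigA_distr_bigA coef_sum [RHS]big_mkcond; apply: eq_bigr => a _ /=.
under eq_bigr do rewrite -mul_polyC.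
rewrite big_split /= -rmorph_prod prodrXr coefCM coefXn eq_sym.
by case: eqP; rewrite ?mulr1 ?mulr0.
Qed.

(* Coefficients of the power series (1 - c g w) / (1 - g w). *)
Definition ratio_coef (g : R) (j : nat) : R :=
  if j == 0%N then 1 else (1 - c) * g ^+ j.

Definition ratio_trunc (g : R) (t : nat) : {poly R} :=
  \poly_(j < t.+1) ratio_coef g j.

Lemma ratio_trunc_eq_upto g t :
  eq_upto t ((1 - g *: 'X) * ratio_trunc g t) (1 - (g * c) *: 'X).
Proof.
move=> j hj.
rewrite mulrBl mul1r coefB -scalerAl coefZ coefXM !coef_poly coefB coef1 coefZ.
rewrite coefX ltnS hj /ratio_coef.
case: j hj => [|[|j]] hj /=.
- by rewrite !mulr0 !subr0.
- rewrite expr1 !mulr1 mulrBl mul1r addrAC subrr !add0r.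
  by congr (- _); rewrite mulrC.
- by rewrite ifT 1?ltnW // mulr0 subr0 [g ^+ _.+2]exprS mulrCA subrr.
Qed.

Lemma prod_ratio_coef k t (x : 'I_k -> R) (a : {ffun 'I_k -> 'I_t.+1}) :
  \prod_(i < k) ratio_coef (x i) (a i) =
  (1 - c) ^+ nparts a * \prod_(i < k) x i ^+ a i.
Proof.
rewrite (eq_bigr (fun i => (if a i != 0 :> nat then 1 - c else 1) * x i ^+ a i)).
  by rewrite big_split /= -big_mkcond prodr_const.
by move=> i _; rewrite /ratio_coef; case: eqP => [->|]; rewrite ?mulr1.
Qed.

End GeometricRatio.

Lemma nparts_gt0 k t (a : {ffun 'I_k -> 'I_t.+1}) :
  (\sum_(i < k) (a i : nat) = t)%N -> (0 < t)%N -> (0 < nparts a)%N.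
Proof.
move=> sum_a t_gt0; rewrite lt0n; apply/negP => /eqP/card0_eq a0.
move: t_gt0; rewrite -sum_a big1 // => i _.
by apply/eqP; have := a0 i; rewrite !inE => /negbFE.
Qed.

Lemma ps_inv_seq_size f n : size (ps_inv_seq f n) = n.+1.
Proof. by elim: n => //= n IH; rewrite size_rcons IH. Qed.

Lemma ps_inv_seq_nth f n j : (j <= n)%N -> nth 0 (ps_inv_seq f n) j = ps_inv f j.
Proof.
elim: n j => [|n IH] j; first by rewrite leqn0 => /eqP ->.
rewrite leq_eqVlt => /orP[/eqP -> //|hj].
by rewrite /= nth_rcons ps_inv_seq_size hj IH.
Qed.

Lemma ps_invS f n :
  ps_inv f n.+1 = - (f 0%N)^-1 * \sum_(i < n.+1) f i.+1 * ps_inv f (n - i).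
Proof.
rewrite /ps_inv /= nth_rcons ps_inv_seq_size ltnn eqxx big_add1 /= big_mkord.
by congr (_ * _); apply: eq_bigr => i _; rewrite subSS ps_inv_seq_nth ?leq_subr.
Qed.

Lemma mul_poly_ps_inv (b : {poly C}) N : b`_0 = 1 ->
  eq_upto N (b * \poly_(i < N.+1) ps_inv (ps_of_poly b) i) 1.
Proof.
move=> b0 [|m] hm; rewrite coefM coef1.
  by rewrite big_ord1 coef_poly /ps_inv /= /ps_of_poly b0 invr1 mulr1.
rewrite big_ord_recl coef_poly ltnS hm ps_invS /ps_of_poly b0 invr1 mul1r mulN1r.
apply/eqP; rewrite /= addrC subr_eq0; apply/eqP; apply: eq_bigr => i _.
rewrite coef_poly /bump /= add1n subSS ifT // ltnS.
exact: leq_trans (leq_subr _ _) (ltnW hm).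
Qed.

Lemma ps_div_polyE (a b p : {poly C}) N n : b`_0 = 1 -> eq_upto N (b * p) a ->
  (n <= N)%N -> ps_div_poly a b n = p`_n.
Proof.
move=> b0 hbp hn; set I := \poly_(i < N.+1) ps_inv (ps_of_poly b) i.
have -> : ps_div_poly a b n = (a * I)`_n.
  rewrite coefM; apply: eq_bigr => i _.
  by rewrite coef_poly ltnS (leq_trans (leq_subr _ _) hn).
have hI : eq_upto N (p * (b * I)) (p * 1).
  by apply: eq_uptoM => //; apply: mul_poly_ps_inv.
have haI : eq_upto N (a * I) (p * (b * I)).
  by rewrite mulrA [p * b]mulrC; apply: eq_uptoM => //; apply: eq_upto_sym.
by rewrite haI // hI // mulr1.
Qed.

Lemma phiflatE gs : phiflat gs = \prod_(i < size gs) (1 - gs`_i *: 'X).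
Proof. by rewrite /phiflat (big_nth 0) big_mkord. Qed.

Lemma phiflat_comp_scale gs c :
  phiflat gs \Po (c *: 'X) = \prod_(i < size gs) (1 - (gs`_i * c) *: 'X).
Proof.
rewrite phiflatE (big_morph _ (fun p r => comp_polyM p r _) (comp_polyC 1 _)).
apply: eq_bigr => i _.
by rewrite comp_polyB comp_polyC comp_polyZ comp_polyX scalerA mulrC.
Qed.

Lemma coef0_prod_1BZX (I : Type) (r : seq I) (G : I -> C) :
  (\prod_(i <- r) (1 - G i *: 'X))`_0 = 1.
Proof.
rewrite coef0_prod; apply: big1 => i _.
by rewrite coefB coef1 coefZ coefX mulr0 subr0.
Qed.

Section PhiflatRatio.
Variables (q : C) (gs : seq C).
Hypothesis q_neq0 : q != 0.

Let F := ps_div_poly (phiflat gs \Po (q ^- 2 *: 'X)) (phiflat gs).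

Lemma p_t_coef_prod t : (0 < t)%N ->
  (q - q^-1) * p_t q t gs =
  (\prod_(i < size gs) ratio_trunc (q ^- 2) gs`_i t)`_t.
Proof.
move=> t_gt0; rewrite coef_prod_poly /p_t mulr_sumr; apply: eq_bigr => a /eqP ha.
rewrite prod_ratio_coef mulrA; congr (_ * _).
have /prednK <- := nparts_gt0 ha t_gt0.
have -> : 1 - q ^- 2 = (q - q^-1) * q^-1 by rewrite mulrBl mulfV // -expr2 exprVn.
by rewrite exprMn exprVn !exprS; ring.
Qed.

Lemma phiflat_ratio_coef t : (0 < t)%N -> F t = (q - q^-1) * p_t q t gs.
Proof.
move=> t_gt0; rewrite p_t_coef_prod //; apply: ps_div_polyE (leqnn t).
  exact: coef0_prod_1BZX.
rewrite phiflat_comp_scale phiflatE -big_split; apply: eq_upto_prod => i.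
exact: ratio_trunc_eq_upto.
Qed.

Lemma phiflat_ratio_coef0 : F 0%N = 1.
Proof.
rewrite /F (@ps_div_polyE _ _ 1 0) ?coef1 ?coef0_prod_1BZX // => i.
by rewrite leqn0 => /eqP ->; rewrite mulr1 phiflat_comp_scale phiflatE !coef0_prod_1BZX.
Qed.

End PhiflatRatio.

Lemma subr_invr_neq0 (F : fieldType) (q : F) :
  q != 0 -> q ^+ 2 != 1 -> q - q^-1 != 0.
Proof.
move=> q_neq0; apply: contraNneq => /eqP; rewrite subr_eq0 => /eqP q_inv.
by rewrite expr2 {2}q_inv mulfV.
Qed.

Lemma p_t_nil q t : (0 < t)%N -> p_t q t [::] = 0.
Proof.
move=> t_gt0; rewrite /p_t big_pred0 // => a.
by rewrite big_ord0 eq_sym eqn0Ngt t_gt0.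
Qed.

Section HighestWeight.
Variables (q Q beta : C) (gs : seq C).

Lemma uQ_lamE : uQ_lam q beta gs = beta * q ^+ size gs.
Proof. by rewrite /uQ_lam; case: eqP => [->|]; rewrite ?mulr1. Qed.

Lemma uQ_uE t : (0 < t)%N -> uQ_u q Q beta gs t = pQ_t q Q beta t gs.
Proof.
move=> t_gt0; rewrite /uQ_u; case: eqP => // /size0nil ->.
rewrite /pQ_t p_t_nil // add0r big1_seq ?mulr0 ?addr0 // => z /andP[_].
by rewrite mem_index_iota => /andP[z_gt0 _]; rewrite p_t_nil ?mulr0.
Qed.

Lemma pQ_t1 : pQ_t q Q beta 1 gs = p_t q 1 gs + beta_tilde q beta * Q^-1.
Proof. by rewrite /pQ_t big_geq // mulr0 addr0. Qed.

Hypotheses (Q_neq0 : Q != 0) (qq_neq0 : q - q^-1 != 0).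

(* The beta-tilde tails telescope, since (q - q^-1) beta_tilde = 1 - beta^-2. *)
Lemma pQ_tSB t : (0 < t)%N ->
  pQ_t q Q beta t gs - Q * pQ_t q Q beta t.+1 gs
  = beta ^- 2 * p_t q t gs - Q * p_t q t.+1 gs.
Proof.
move=> t_gt0; set b := beta_tilde q beta.
have shift : Q * \sum_(1 <= z < t.+1) b * Q ^- (t.+1 - z) * p_t q z gs
    = \sum_(1 <= z < t) b * Q ^- (t - z) * p_t q z gs + b * p_t q t gs.
  rewrite big_nat_recr //= subSnn expr1 mulrDr mulr_sumr.
  congr (_ + _); last by field.
  apply: eq_big_nat => z /andP[_ z_lt]; rewrite subSn 1?ltnW // exprS invfM.
  by field; rewrite expf_neq0.
have bE : (q - q^-1) * b = 1 - beta ^- 2 by rewrite mulrA mulfV ?mul1r.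
have tail : Q * (b / Q ^+ t.+1) = b / Q ^+ t by rewrite exprS invfM mulrCA mulVKf.
rewrite /pQ_t -/b !mulrDr tail [Q * ((q - q^-1) * _)]mulrCA shift mulrDr mulrA bE.
ring.
Qed.

End HighestWeight.

Definition Psi_eigenvalue (q Q lam : C) (u : nat -> C) (t : int) : C :=
  match t with
  | Negz 0 => - (Q * lam)
  | Negz _ => 0
  | Posz 0 => lam * (1 - (q - q^-1) * Q * u 1%N)
  | Posz t => (q - q^-1) * lam * (u t - Q * u t.+1)
  end.

Lemma Psi_highest_weight (q Q : C) (V : lmodType C) (M : UqModule q Q V)
    lam u v0 t :
  highest_weight_vector M lam u v0 -> Psi M t v0 = Psi_eigenvalue q Q lam u t *: v0.
Proof.
case=> _ _ Kv0 Jv0.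
have KZ a : Kp M (a *: v0) = (a * lam) *: v0 by rewrite linearZ_LR Kv0 scalerA.
case: t => [[|t]|[|t]] /=.
- by rewrite Jv0 // KZ Kv0 !scalerA -scalerBl; congr (_ *: _); ring.
- by rewrite !Jv0 // scalerA -scalerBl KZ scalerA; congr (_ *: _); ring.
- by rewrite Kv0 scalerA scaleNr.
- by rewrite scale0r.
Qed.

Lemma Psi_eigenvalue_uQ (q Q beta : C) (gs : seq C) t :
    q != 0 -> q ^+ 2 != 1 -> Q != 0 -> beta != 0 ->
  Psi_eigenvalue q Q (uQ_lam q beta gs) (uQ_u q Q beta gs) t
  = q ^+ size gs
    * laurent_mul_shift (ps_div_poly (phiflat gs \Po (q ^- 2 *: 'X)) (phiflat gs))
        beta^-1 (- (Q * beta)) t.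
Proof.
move=> q_neq0 q2_neq1 Q_neq0 beta_neq0.
have qq_neq0 := subr_invr_neq0 q_neq0 q2_neq1.
rewrite uQ_lamE; case: t => [[|t]|[|t]] /=.
- rewrite uQ_uE // pQ_t1 phiflat_ratio_coef0 phiflat_ratio_coef // /beta_tilde.
  by field; rewrite q_neq0 beta_neq0 Q_neq0 -expr2 subr_eq0 q2_neq1.
- rewrite !uQ_uE // pQ_tSB // !phiflat_ratio_coef //.
  by field; rewrite q_neq0 beta_neq0.
- by rewrite phiflat_ratio_coef0; ring.
- by rewrite mulr0.
Qed.

Theorem mainTheorem8
  (q Q : C) (hq0 : q != 0) (hq : forall n : nat, (0 < n)%N -> q ^+ n != 1)
  (hQ : Q != 0)
  (phi : {poly C}) (gs : seq C)
  (hphi0 : phi != 0)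
  (hphi : phi = lead_coef phi *: \prod_(g <- gs) ('X - g%:P))
  (hphiQ : ~~ root phi ((lead_coef phi) ^- 2 * Q^-1))
  (V : lmodType C) (M : UqModule q Q V) (v0 : V)
  (hL : is_L M (uQ_lam q (lead_coef phi) gs) (uQ_u q Q (lead_coef phi) gs) v0) :
  forall t : int,
    Psi M t v0
    = (q ^+ (size phi).-1
       * laurent_mul_shift
           (ps_div_poly (phiflat gs \Po (q ^- 2 *: 'X)) (phiflat gs))
           (lead_coef phi)^-1 (- (Q * lead_coef phi)) t) *: v0.
Proof.
move=> t; have lc_neq0 : lead_coef phi != 0 by rewrite lead_coef_eq0.
have -> : (size phi).-1 = size gs.
  by rewrite hphi size_scale // size_prod_XsubC.
by rewrite (Psi_highest_weight _ hL.2) Psi_eigenvalue_uQ // hq.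
Qed.
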